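(* Let $A=(A_1,\dots,A_n)\in\mathbb{Z}^{d\times n}$ have rank $d$. The Basic Generalized Euclidean Algorithm (described in the context) terminates on input $A$, and the matrix $B$ it returns is a basis of $\mathcal{L}(A)$, i.e. $B\in\mathbb{Z}^{d\times d}$ and $\mathcal{L}(B)=\mathcal{L}(A)$.
   Context: For a matrix $M$ with columns $M_1,\dots,M_m$, $\mathcal{L}(M)=\{\sum_i\lambda_iM_i:\lambda\in\mathbb{Z}^m\}$. For real $y$, $\lfloor y\rceil:=\lfloor y+1/2\rfloor$ is the nearest integer. Basic Generalized Euclidean Algorithm. Input: $A=(A_1,\dots,A_n)\in\mathbb{Z}^{d\times n}$ of rank $d$. 1. Choose $d$ linearly independent columns of $A$ and let $B=(B_1,\dots,B_d)$ be the matrix they form. Let $C$ be the multiset of the remaining $n-d$ columns. 2. While $C\neq\emptyset$: - choose any $c\in C$ and compute $x\in\mathbb{Q}^d$ with $Bx=c$; - if $x\in\mathbb{Z}^d$, remove $c$ from $C$; - otherwise choose an index $\ell$ with $x_\ell\notin\mathbb{Z}$, remove $c$ from $C$, add the current column $B_\ell$ to $C$, and replace the column $B_\ell$ by $c-\bigl(B_\ell\lfloor x_\ell\rceil+\sum_{j\neq\ell}B_j\lfloor x_j\rfloor\bigr)$. 3. Return $B$. *)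

From mathcomp Require Import all_boot all_order all_algebra.
Set Implicit Arguments. Unset Strict Implicit. Unset Printing Implicit Defensive.
Import Order.TTheory GRing.Theory Num.Theory.
Local Open Scope ring_scope.

Definition toQ {m k : nat} (M : 'M[int]_(m, k)) : 'M[rat]_(m, k) :=
  map_mx (fun z : int => z%:~R) M.

Definition round_rat (y : rat) : int := Num.floor (y + 2%:R^-1).

Definition in_lattice {d m : nat} (M : 'M[int]_(d, m)) (v : 'cV[int]_d) : Prop :=
  exists lam : 'cV[int]_m, v = M *m lam.

Definition same_lattice {d m k : nat} (M : 'M[int]_(d, m)) (N : 'M[int]_(d, k)) : Prop :=
  forall v, in_lattice M v <-> in_lattice N v.

(* state of the algorithm: current basis B (columns B_1..B_d) and multiset C *)
Definition gea_state (d : nat) := ('M[int]_d * seq 'cV[int]_d)%type.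

Definition set_col {d : nat} (B : 'M[int]_d) (l : 'I_d) (w : 'cV[int]_d) : 'M[int]_d :=
  \matrix_(i, k) if k == l then w i ord0 else B i k.

Definition reduced_col {d : nat} (B : 'M[int]_d) (c : 'cV[int]_d)
    (x : 'cV[rat]_d) (l : 'I_d) : 'cV[int]_d :=
  c - (col l B *~ round_rat (x l ord0)
       + \sum_(j < d | j != l) col j B *~ Num.floor (x j ord0)).

(* one iteration of the while loop (all admissible choices) *)
Inductive gea_step {d : nat} : gea_state d -> gea_state d -> Prop :=
| gea_step_int (B : 'M[int]_d) (C : seq 'cV[int]_d) (c : 'cV[int]_d) (x : 'cV[rat]_d) :
    c \in C -> toQ B *m x = toQ c -> (forall j, x j ord0 \is a Num.int) ->
    gea_step (B, C) (B, rem c C)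
| gea_step_red (B : 'M[int]_d) (C : seq 'cV[int]_d) (c : 'cV[int]_d) (x : 'cV[rat]_d) (l : 'I_d) :
    c \in C -> toQ B *m x = toQ c -> x l ord0 \isn't a Num.int ->
    gea_step (B, C) (set_col B l (reduced_col B c x l), col l B :: rem c C).

Inductive gea_reachable {d : nat} (s : gea_state d) : gea_state d -> Prop :=
| gea_refl : gea_reachable s s
| gea_trans t u : gea_reachable s t -> gea_step t u -> gea_reachable s u.

Definition sel_cols {d n : nat} (A : 'M[int]_(d, n)) (f : 'I_d -> 'I_n) : 'M[int]_d :=
  \matrix_(i, j) A i (f j).

Definition gea_init {d n : nat} (A : 'M[int]_(d, n)) (f : 'I_d -> 'I_n) : gea_state d :=
  (sel_cols A f, [seq col j A | j <- enum 'I_n & j \notin codom f]).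

From mathcomp Require Import all_boot all_order all_algebra.
From mathcomp Require Import ring lra.
Import Order.TTheory GRing.Theory Num.Theory.
Set Implicit Arguments. Unset Strict Implicit.
Local Open Scope ring_scope.

(* Two invariants hold along every run: [det B <> 0], and the columns of [B]
   together with the elements of [C] generate the same subgroup of [Z^d] as the
   columns of [A]; when [C] is empty the latter says that [B] is a basis of
   [L(A)].  Writing [c = B x] with [y] the vector of floors (and the rounding at
   [l]), the new column is [B (x - y)], so the new determinant is
   [(x_l - round x_l) det B], with a factor of absolute value in [(0, 1/2]].
   Hence [|det B| * (|C| + 1)] is a positive integer that decreases strictly at
   every step, which gives termination; and since [B] stays invertible over the
   rationals, some step always applies while [C] is nonempty. *)

Section ReplaceColumn.
Variables (R : comPzRingType) (d : nat).

Definition replace_col (M : 'M[R]_d) (l : 'I_d) (w : 'cV[R]_d) : 'M[R]_d :=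
  \matrix_(i, k) if k == l then w i 0 else M i k.

Lemma cofactor_replace_col M l w i : cofactor (replace_col M l w) i l = cofactor M i l.
Proof.
rewrite /cofactor; congr (_ * \det _); apply/matrixP => a b.
by rewrite !mxE eq_sym (negbTE (neq_lift l b)).
Qed.

Lemma det_replace_col_mul M l (z : 'cV[R]_d) :
  \det (replace_col M l (M *m z)) = z l 0 * \det M.
Proof.
rewrite (expand_det_col _ l).
under eq_bigr => i _ do rewrite cofactor_replace_col mxE eqxx mxE big_distrl /=.
rewrite exchange_big /=.
transitivity (\sum_j z j 0 * (\adj M *m M) l j).
  apply: eq_bigr => j _; rewrite mxE big_distrr /=; apply: eq_bigr => i _.
  by rewrite [in RHS]mxE; ring.
rewrite mul_adj_mx (bigD1 l) //= big1 ?addr0; first by rewrite mxE eqxx mulr1n.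
by move=> j /negbTE nj; rewrite mxE eq_sym nj mulr0n mulr0.
Qed.

End ReplaceColumn.

Lemma mulmx_sum_colz m k (M : 'M[int]_(m, k)) (y : 'cV[int]_k) :
  M *m y = \sum_j col j M *~ y j 0.
Proof.
apply/matrixP => i o; rewrite mxE summxE; apply: eq_bigr => j _.
by rewrite -scaler_int !mxE (ord1 o) intz mulrC.
Qed.

Lemma toQE m k (M : 'M[int]_(m, k)) i j : toQ M i j = (M i j)%:~R.
Proof. by rewrite mxE. Qed.

Lemma toQ_inj m k : injective (@toQ m k).
Proof.
move=> M N eMN; apply/matrixP => i j.
by apply: (@intr_inj rat); rewrite -!toQE eMN.
Qed.

Lemma toQ_mul m k p (M : 'M[int]_(m, k)) (N : 'M[int]_(k, p)) :
  toQ (M *m N) = toQ M *m toQ N.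
Proof. exact: map_mxM. Qed.

Lemma toQ_sub m k (M N : 'M[int]_(m, k)) : toQ (M - N) = toQ M - toQ N.
Proof. exact: map_mxB. Qed.

Lemma toQ_det d (B : 'M[int]_d) : \det (toQ B) = (\det B)%:~R.
Proof. exact: det_map_mx. Qed.

Lemma toQ_unitmx d (B : 'M[int]_d) : (toQ B \in unitmx) = (\det B != 0).
Proof. by rewrite unitmxE unitfE toQ_det intr_eq0. Qed.

Lemma toQ_set_col d (B : 'M[int]_d) l w :
  toQ (set_col B l w) = replace_col (toQ B) l (toQ w).
Proof. by apply/matrixP => i k; rewrite !mxE; case: eqP. Qed.

Lemma toQ_floor_col d (x : 'cV[rat]_d) :
  (forall j, x j 0 \is a Num.int) -> toQ (\col_j Num.floor (x j 0)) = x.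
Proof. by move=> x_int; apply/matrixP => i o; rewrite toQE mxE (ord1 o) floorK. Qed.

Lemma round_rat_dist (y : rat) : `|y - (round_rat y)%:~R| <= 2^-1.
Proof.
have /andP[lo hi] := floor_itv (y + 2^-1); move: lo hi.
rewrite /round_rat intrD; set r := (Num.floor _)%:~R => lo hi.
by rewrite ler_norml; apply/andP; split; lra.
Qed.

Lemma round_rat_neq (y : rat) : y \isn't a Num.int -> y - (round_rat y)%:~R != 0.
Proof. by apply: contra; rewrite subr_eq0 => /eqP ->; apply: intr_int. Qed.

Section Reduction.
Variable d : nat.
Implicit Types (B : 'M[int]_d) (c : 'cV[int]_d) (x : 'cV[rat]_d).

Definition reduction_coeffs x (l : 'I_d) : 'cV[int]_d :=
  \col_j (if j == l then round_rat (x j 0) else Num.floor (x j 0)).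

Lemma reduced_colE B c x l : reduced_col B c x l = c - B *m reduction_coeffs x l.
Proof.
rewrite /reduced_col mulmx_sum_colz [in RHS](bigD1 l) //= !mxE eqxx.
by congr (_ - (_ + _)); apply: eq_bigr => j /negbTE nj; rewrite mxE nj.
Qed.

Lemma det_set_reduced_col B c x l : toQ B *m x = toQ c ->
  (\det (set_col B l (reduced_col B c x l)))%:~R
    = (x l 0 - (round_rat (x l 0))%:~R) * (\det B)%:~R :> rat.
Proof.
move=> Bx; rewrite -!toQ_det toQ_set_col reduced_colE toQ_sub toQ_mul -Bx.
by rewrite -mulmxBr det_replace_col_mul !mxE eqxx.
Qed.

Lemma absz_det_set_reduced_col B c x l :
  toQ B *m x = toQ c -> x l 0 \isn't a Num.int -> \det B != 0 ->
  (0 < `|\det (set_col B l (reduced_col B c x l))| < `|\det B|)%N.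
Proof.
move=> Bx xl_frac detB; have := det_set_reduced_col l Bx; set e := x l 0 - _ => eDet.
have e_half : `|e| <= 2^-1 := round_rat_dist _.
have e_neq0 : e != 0 := round_rat_neq xl_frac.
have detBQ : 0 < `|(\det B)%:~R : rat| by rewrite normr_gt0 intr_eq0.
rewrite absz_gt0 -(intr_eq0 rat) eDet mulf_neq0 ?intr_eq0 //=.
rewrite -ltz_nat !abszE -(ltr_int rat) !intr_norm eDet normrM.
have : `|e| * `|(\det B)%:~R : rat| <= 2^-1 * `|(\det B)%:~R : rat|.
  by rewrite ler_pM2r.
by move: detBQ; set D := `|_|; lra.
Qed.

End Reduction.

Definition is_subgroup d (P : 'cV[int]_d -> Prop) :=
  P 0 /\ forall u v, P u -> P v -> P (u - v).

Section Subgroup.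
Variables (d : nat) (P : 'cV[int]_d -> Prop) (P_subgroup : is_subgroup P).

Lemma subgroupN u : P u -> P (- u).
Proof. by case: P_subgroup => P0 PB Pu; rewrite -sub0r; apply: PB. Qed.

Lemma subgroupD u v : P u -> P v -> P (u + v).
Proof.
by case: P_subgroup => _ PB Pu Pv; rewrite -[v]opprK; apply/PB/subgroupN.
Qed.

Lemma subgroupMn u n : P u -> P (u *+ n).
Proof.
move=> Pu; elim: n => [|n IHn]; first by rewrite mulr0n; case: P_subgroup.
by rewrite mulrS; apply: subgroupD.
Qed.

Lemma subgroupMz u k : P u -> P (u *~ k).
Proof.
by case: k => n Pu; [apply: subgroupMn | rewrite NegzE mulrNz; apply/subgroupN/subgroupMn].
Qed.

Lemma subgroup_mulmx m (M : 'M[int]_(d, m)) y :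
  (forall j, P (col j M)) -> P (M *m y).
Proof.
move=> PM; rewrite mulmx_sum_colz; apply: big_ind => //.
- by case: P_subgroup.
- exact: subgroupD.
- by move=> j _; apply: subgroupMz.
Qed.

End Subgroup.

Lemma in_lattice_subgroup d m (M : 'M[int]_(d, m)) : is_subgroup (in_lattice M).
Proof.
split; first by exists 0; rewrite mulmx0.
by move=> u v [a ->] [b ->]; exists (a - b); rewrite mulmxBr.
Qed.

Lemma in_lattice_col d m (M : 'M[int]_(d, m)) j : in_lattice M (col j M).
Proof. by exists (delta_mx j 0); rewrite colE. Qed.

Lemma same_latticeP d m k (M : 'M[int]_(d, m)) (N : 'M[int]_(d, k)) :
  (forall P, is_subgroup P -> (forall j, P (col j M)) <-> (forall j, P (col j N))) ->
  same_lattice M N.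
Proof.
move=> sameMN v; split=> -[lam ->]; apply: subgroup_mulmx.
all: try exact: in_lattice_subgroup.
all: by apply/sameMN; [apply: in_lattice_subgroup | apply: in_lattice_col].
Qed.

Lemma col_set_col d (B : 'M[int]_d) l w k :
  col k (set_col B l w) = if k == l then w else col k B.
Proof.
case: eqP => [->|/eqP/negbTE kl]; apply/matrixP => i o.
  by rewrite !mxE eqxx (ord1 o).
by rewrite !mxE kl.
Qed.

Lemma mem_rem_or (T : eqType) (c c' : T) C :
  c \in C -> c' \in C -> c' = c \/ c' \in rem c C.
Proof.
move=> Cc Cc'; move: (perm_mem (perm_to_rem Cc) c'); rewrite Cc' in_cons.
by case/esym/orP => [/eqP|]; auto.
Qed.

Section Invariants.
Variables (d n : nat) (A : 'M[int]_(d, n)).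

Definition same_span (s : gea_state d) :=
  forall P, is_subgroup P ->
    (forall j, P (col j s.1)) /\ {in s.2, forall c, P c} <-> forall j, P (col j A).

Lemma same_span_step s t : gea_step s t -> same_span s -> same_span t.
Proof.
case=> {s t} B C c x.
- move=> Cc Bx x_int span_s P P_sub; rewrite -(span_s P P_sub) /=.
  have Bc : c = B *m \col_j Num.floor (x j 0).
    by apply: toQ_inj; rewrite toQ_mul toQ_floor_col.
  split=> -[PB PC]; split=> // c' Cc'.
    have [->|] := mem_rem_or Cc Cc'; last exact: PC.
    by rewrite Bc; apply: subgroup_mulmx.
  exact: PC (mem_rem Cc').
- move=> l Cc Bx _ span_s P P_sub; rewrite -(span_s P P_sub) /= reduced_colE.
  set y := reduction_coeffs x l.
  split=> -[PB PC].
  + have PBl : P (c - B *m y) by have := PB l; rewrite col_set_col eqxx.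
    have PB' j : P (col j B).
      have [->|/negbTE jl] := eqVneq j l; first by apply: PC; rewrite mem_head.
      by have := PB j; rewrite col_set_col jl.
    split=> // c' Cc'; have [->|] := mem_rem_or Cc Cc'.
      by rewrite -(subrK (B *m y) c); apply: subgroupD => //; apply: subgroup_mulmx.
    by move=> remCc'; apply: PC; rewrite in_cons remCc' orbT.
  + have PBl : P (c - B *m y).
      by have [_ PB'] := P_sub; apply: PB'; [apply: PC | apply: subgroup_mulmx].
    split=> [k|c']; first by rewrite col_set_col; case: eqP.
    by rewrite in_cons => /orP[/eqP ->|/mem_rem]; [apply: PB | apply: PC].
Qed.

End Invariants.

Definition gea_measure d (s : gea_state d) := (absz (\det s.1) * (size s.2).+1)%N.

Lemma gea_step_measure d (s t : gea_state d) : gea_step s t -> \det s.1 != 0 ->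
  \det t.1 != 0 /\ (gea_measure t < gea_measure s)%N.
Proof.
rewrite /gea_measure; case=> {s t} B C c x => [|l] Cc.
all: have C_gt0 : (0 < size C)%N by case: (C) Cc.
all: rewrite /= size_rem // prednK //.
  by move=> _ _ detB; rewrite ltn_pmul2l ?absz_gt0.
move=> Bx xl_frac detB.
have /andP[detB'_gt0 detB'_lt] := absz_det_set_reduced_col Bx xl_frac detB.
by rewrite -absz_gt0 detB'_gt0 ltn_pmul2r.
Qed.

Lemma gea_acc d (s : gea_state d) : \det s.1 != 0 -> Acc (fun t s => gea_step s t) s.
Proof.
move: {2}(gea_measure s).+1 (ltnSn (gea_measure s)) => k.
elim: k s => [//|k IHk] s lt_sk detB; constructor => t st.
have [detB' lt_ts] := gea_step_measure st detB.
by apply: IHk => //; apply: leq_trans lt_ts _.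
Qed.

Lemma gea_reachable_inv d n (A : 'M[int]_(d, n)) s0 s : gea_reachable s0 s ->
  \det s0.1 != 0 -> same_span A s0 -> \det s.1 != 0 /\ same_span A s.
Proof.
move=> reach detB0 span0; elim: reach => [|t u _ [detBt span_t] tu]; first by [].
by split; [case: (gea_step_measure tu detBt) | apply: same_span_step tu span_t].
Qed.

Lemma gea_progress d (B : 'M[int]_d) c C :
  \det B != 0 -> exists t, gea_step (B, c :: C) t.
Proof.
move=> detB; set x := invmx (toQ B) *m toQ c.
have Bx : toQ B *m x = toQ c by rewrite mulKVmx ?toQ_unitmx.
have Cc : c \in c :: C := mem_head c C.
have [x_int|] := boolP [forall j, x j 0 \is a Num.int].
  by eexists; apply: gea_step_int Cc Bx (forallP x_int).
rewrite negb_forall => /existsP[l xl_frac].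
by eexists; apply: gea_step_red Cc Bx xl_frac.
Qed.

Section Initialisation.
Variables (d n : nat) (A : 'M[int]_(d, n)) (f : 'I_d -> 'I_n).

Lemma col_sel_cols j : col j (sel_cols A f) = col (f j) A.
Proof. by apply/matrixP => i o; rewrite !mxE. Qed.

Lemma det_gea_init : row_free (toQ (sel_cols A f))^T -> \det (gea_init A f).1 != 0.
Proof. by rewrite row_free_unit unitmx_tr toQ_unitmx. Qed.

Lemma same_span_gea_init : same_span A (gea_init A f).
Proof.
move=> P _ /=; split=> [[PB PC] j | PA].
  have [/codomP[k ->]|jf] := boolP (j \in codom f); first by rewrite -col_sel_cols.
  by apply: PC; apply: map_f; rewrite mem_filter jf mem_enum.
by split=> [j|_ /mapP[j _ ->]]; rewrite ?col_sel_cols.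
Qed.

End Initialisation.

Theorem theorem1 (d n : nat) (A : 'M[int]_(d, n))
    (hA : \rank (toQ A) = d)
    (f : 'I_d -> 'I_n) (hf : injective f)
    (hB : row_free (toQ (sel_cols A f))^T) :
  (* termination: no infinite run, whatever choices are made *)
  Acc (fun t s => gea_step s t) (gea_init A f) /\
  (* the loop never gets stuck while C is nonempty *)
  (forall s, gea_reachable (gea_init A f) s -> s.2 != [::] ->
     exists t, gea_step s t) /\
  (* the returned B is a basis of L(A) *)
  (forall s, gea_reachable (gea_init A f) s -> s.2 = [::] ->
     same_lattice s.1 A).
Proof.
have detB0 := det_gea_init hB.
have inv s (reach : gea_reachable (gea_init A f) s) :=
  gea_reachable_inv reach detB0 (same_span_gea_init A f).
split; first exact: gea_acc.
split=> [[B [|c C]] // /inv[detB _] _ | [B C] /inv[_ span] /= C0].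
  exact: gea_progress.
apply: same_latticeP => P P_sub; rewrite -(span P P_sub) C0.
by split=> [PB | []].
Qed.
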